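(* Let $0<\varepsilon_1<\varepsilon_2<1$ and let $\psi:[0,1]\to[0,1]$ be a strictly increasing continuous function with $\psi(\varepsilon_1)=\varepsilon_1$ and $\psi(\varepsilon_2)=\varepsilon_2$; write $\psi_1=\psi|_{[0,\varepsilon_1]}$, $\psi_2=\psi|_{[\varepsilon_1,\varepsilon_2]}$, $\psi_3=\psi|_{[\varepsilon_2,1]}$. Let $a_0=b_0=c_0=1$ and for $k\ge1$ define the $k$-fold integrals $$a_k=\Big\{{\varepsilon_1\atop 0},{\psi_1\atop 0},\dots,{\psi_1\atop 0}\Big\},\quad b_k=\Big\{{\varepsilon_2\atop \varepsilon_1},{\psi_2\atop \varepsilon_1},\dots,{\psi_2\atop \varepsilon_1}\Big\},$$ $$c_k=\Big\{{1\atop \varepsilon_2},{\psi_3\atop \varepsilon_2},\dots,{\psi_3\atop \varepsilon_2}\Big\},\quad d_k=\Big\{{1\atop 0},{\psi\atop 0},\dots,{\psi\atop 0}\Big\}.$$ Then for $n=1,2,\dots$, $$d_n=\sum_{k=0}^n c_k\sum_{l=0}^{n-k}b_l\,a_{n-k-l}.$$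
   Context: For functions (or constants) $\alpha_i,\beta_i$, the symbol $\Big\{{\alpha_1\atop\beta_1},\dots,{\alpha_n\atop\beta_n}\Big\}$ denotes the iterated integral $\int_{\beta_1}^{\alpha_1}\int_{\beta_2(x_1)}^{\alpha_2(x_1)}\cdots\int_{\beta_n(x_{n-1})}^{\alpha_n(x_{n-1})}dx_n\cdots dx_1$ (here the first limits $\alpha_1,\beta_1$ are constants). In each of $a_k,b_k,c_k,d_k$ there are $k$ entries, the first one being the constant-limit entry shown and the remaining $k-1$ entries being the repeated entry shown. *)

From Stdlib Require Import Reals.
From Coquelicot Require Import Coquelicot.
Open Scope R_scope.

Fixpoint inner_int (psi : R -> R) (lo : R) (m : nat) (x : R) : R :=
  match m with
  | O => 1
  | S m' => RInt (inner_int psi lo m') lo (psi x)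
  end.

(* kfold psi lo hi k = { hi/lo, psi/lo, ..., psi/lo } (k entries),
   with the convention kfold _ _ _ 0 = 1. *)
Definition kfold (psi : R -> R) (lo hi : R) (k : nat) : R :=
  match k with
  | O => 1
  | S k' => RInt (inner_int psi lo k') lo hi
  end.

From Stdlib Require Import Reals Lra Lia.
From Coquelicot Require Import Coquelicot.
Open Scope R_scope.

(* Splitting the outermost integral at [eps2] and
   expanding the inner integrand, which is again an iterated integral of the
   same kind with upper limit [psi t], gives by induction on [n]
   [kfold psi lo y n = sum_k kfold psi mid y k * kfold psi lo mid (n - k)]
   for every [y] in an interval [[mid, top]] that [psi] maps into itself.  The
   fixed points and monotonicity of [psi] make [[eps1, eps2]] and [[eps2, 1]]
   such intervals; one split at [eps2] followed by one at [eps1] is the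
   theorem.  As [psi] is only continuous on [[0, 1]], the computation is done
   for [psi] composed with the clamp to [[0, 1]], which is continuous
   everywhere and does not change any of the integrals. *)

Lemma inner_int_kfold p lo k x : inner_int p lo k x = kfold p lo (p x) k.
Proof. now destruct k. Qed.

Lemma between_in_interval u v a b t :
  u <= a <= v -> u <= b <= v -> Rmin a b <= t <= Rmax a b -> u <= t <= v.
Proof. unfold Rmin, Rmax; destruct Rle_dec; lra. Qed.

Lemma continuous_RInt_upper (f : R -> R) lo x :
  (forall t, continuous f t) -> continuous (RInt f lo) x.
Proof.
  intros f_cont.
  apply (continuous_RInt_1 f lo x (RInt f lo)), filter_forall; intros y.
  apply (RInt_correct (V := R_CompleteNormedModule)).
  apply (ex_RInt_continuous (V := R_CompleteNormedModule)); auto.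
Qed.

Lemma is_RInt_sum_f_R0 (f : nat -> R -> R) (c : nat -> R) a b m :
  (forall k, ex_RInt (f k) a b) ->
  is_RInt (fun t => sum_f_R0 (fun k => f k t * c k) m) a b
          (sum_f_R0 (fun k => RInt (f k) a b * c k) m).
Proof.
  intros f_int.
  assert (term : forall k, is_RInt (fun t => f k t * c k) a b (RInt (f k) a b * c k)).
  { intros k; rewrite Rmult_comm.
    apply (is_RInt_ext (V := R_NormedModule) (fun t => scal (c k) (f k t))).
    - intros t _; apply Rmult_comm.
    - apply (is_RInt_scal (V := R_NormedModule)), (RInt_correct (V := R_CompleteNormedModule)), f_int. }
  induction m as [|m IH]; [apply term|].
  exact (is_RInt_plus (V := R_NormedModule) _ _ a b _ _ IH (term (S m))).
Qed.

Section Splitting.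

Variable p : R -> R.
Hypothesis p_cont : forall x, continuous p x.

Lemma inner_int_continuous lo m x : continuous (inner_int p lo m) x.
Proof.
  revert x; induction m as [|m IH]; intros x; simpl.
  - apply continuous_const.
  - apply (continuous_comp p (fun y => RInt (inner_int p lo m) lo y)); [apply p_cont|].
    now apply continuous_RInt_upper.
Qed.

Lemma ex_RInt_inner_int lo m a b : ex_RInt (inner_int p lo m) a b.
Proof.
  apply (ex_RInt_continuous (V := R_CompleteNormedModule)).
  intros; apply inner_int_continuous.
Qed.

Lemma kfold_split lo mid top (p_stable : forall t, mid <= t <= top -> mid <= p t <= top) :
  forall m y, mid <= y <= top ->
  kfold p lo y m = sum_f_R0 (fun k => kfold p mid y k * kfold p lo mid (m - k)) m.
Proof.
  induction m as [|m IH]; intros y Hy; [simpl; ring|].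
  rewrite decomp_sum by lia; simpl pred.
  replace (kfold p mid y 0 * kfold p lo mid (S m - 0)) with (kfold p lo mid (S m))
    by (simpl; symmetry; apply Rmult_1_l).
  simpl (kfold p lo y (S m)).
  rewrite <- (RInt_Chasles _ lo mid y) by apply ex_RInt_inner_int.
  unfold plus; simpl; f_equal.
  assert (expand : forall t, Rmin mid y < t < Rmax mid y -> inner_int p lo m t =
            sum_f_R0 (fun k => kfold p mid (p t) k * kfold p lo mid (m - k)) m).
  { intros t Ht; rewrite inner_int_kfold; apply IH, p_stable.
    rewrite Rmin_left, Rmax_right in Ht; lra. }
  rewrite (RInt_ext _ _ _ _ expand).
  erewrite is_RInt_unique.
  2:{ apply (is_RInt_sum_f_R0 (fun k t => kfold p mid (p t) k)); intros k.
      apply (ex_RInt_ext (inner_int p mid k)); [intros; apply inner_int_kfold|].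
      apply ex_RInt_inner_int. }
  apply sum_eq; intros k _; simpl (S m - S k)%nat; f_equal; simpl.
  apply RInt_ext; intros; symmetry; apply inner_int_kfold.
Qed.

End Splitting.

Section Locality.

Variables (p q : R -> R) (u v : R).
Hypothesis p_stable : forall x, u <= x <= v -> u <= p x <= v.
Hypothesis p_eq_q : forall x, u <= x <= v -> p x = q x.

Lemma inner_int_local lo m x :
  u <= lo <= v -> u <= x <= v -> inner_int p lo m x = inner_int q lo m x.
Proof.
  intros Hlo; revert x; induction m as [|m IH]; intros x Hx; [reflexivity|].
  simpl; rewrite <- p_eq_q by exact Hx.
  apply RInt_ext; intros t Ht.
  apply IH, (between_in_interval u v lo (p x)); [exact Hlo|apply p_stable, Hx|lra].
Qed.

Lemma kfold_local lo hi k :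
  u <= lo <= v -> u <= hi <= v -> kfold p lo hi k = kfold q lo hi k.
Proof.
  intros Hlo Hhi; destruct k as [|k]; [reflexivity|]; simpl.
  apply RInt_ext; intros t Ht.
  apply inner_int_local, (between_in_interval u v lo hi); [exact Hlo|exact Hlo|exact Hhi|lra].
Qed.

End Locality.

Definition clamp01 (x : R) : R := Rmax 0 (Rmin 1 x).

Lemma clamp01_in x : 0 <= clamp01 x <= 1.
Proof. unfold clamp01, Rmax, Rmin; repeat destruct Rle_dec; lra. Qed.

Lemma clamp01_id x : 0 <= x <= 1 -> clamp01 x = x.
Proof. unfold clamp01, Rmax, Rmin; repeat destruct Rle_dec; lra. Qed.

Lemma clamp01_lipschitz x z : Rabs (clamp01 z - clamp01 x) <= Rabs (z - x).
Proof.
  unfold clamp01, Rmax, Rmin; repeat destruct Rle_dec;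
  unfold Rabs; repeat destruct Rcase_abs; lra.
Qed.

Lemma filterlim_clamp01 x :
  filterlim clamp01 (locally x) (within (fun y => 0 <= y <= 1) (locally (clamp01 x))).
Proof.
  intros P [eps He]; exists eps; intros z Hz.
  apply He; [|apply clamp01_in].
  exact (Rle_lt_trans _ _ _ (clamp01_lipschitz x z) Hz).
Qed.

Lemma continuous_comp_clamp01 (f : R -> R) :
  (forall x, 0 <= x <= 1 ->
     filterlim f (within (fun y => 0 <= y <= 1) (locally x)) (locally (f x))) ->
  forall x, continuous (fun y => f (clamp01 y)) x.
Proof.
  intros f_cont x.
  exact (filterlim_comp _ _ _ _ _ _ _ _ (filterlim_clamp01 x) (f_cont _ (clamp01_in x))).
Qed.

Lemma nondecreasing_maps_interval (f : R -> R) mid top :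
  (forall x y, 0 <= x -> x <= y -> y <= 1 -> f x <= f y) ->
  0 <= mid -> mid <= top -> top <= 1 -> mid <= f mid -> f top <= top ->
  forall t, mid <= t <= top -> mid <= f t <= top.
Proof.
  intros f_mono H0 Hmt H1 Hmid Htop t Ht; split.
  - apply (Rle_trans _ (f mid)); [exact Hmid|apply f_mono; lra].
  - apply (Rle_trans _ (f top)); [apply f_mono; lra|exact Htop].
Qed.

Theorem lemma4p4 (eps1 eps2 : R) (psi : R -> R)
  (h1 : 0 < eps1) (h12 : eps1 < eps2) (h2 : eps2 < 1)
  (hmap : forall x, 0 <= x <= 1 -> 0 <= psi x <= 1)
  (hincr : forall x y, 0 <= x -> x < y -> y <= 1 -> psi x < psi y)
  (hcont : forall x, 0 <= x <= 1 ->
     filterlim psi (within (fun y => 0 <= y <= 1) (locally x)) (locally (psi x)))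
  (hfix1 : psi eps1 = eps1) (hfix2 : psi eps2 = eps2)
  (n : nat) (hn : (1 <= n)%nat) :
  let a := kfold psi 0 eps1 in
  let b := kfold psi eps1 eps2 in
  let c := kfold psi eps2 1 in
  let d := kfold psi 0 1 in
  d n = sum_f_R0 (fun k => c k * sum_f_R0 (fun l => b l * a (n - k - l)%nat) (n - k)) n.
Proof.
  intros a b c d.
  set (q := fun x => psi (clamp01 x)).
  assert (q_cont : forall x, continuous q x) by exact (continuous_comp_clamp01 psi hcont).
  assert (psi_eq_q : forall x, 0 <= x <= 1 -> psi x = q x)
    by (intros x Hx; unfold q; now rewrite clamp01_id).
  assert (psi_mono : forall x y, 0 <= x -> x <= y -> y <= 1 -> psi x <= psi y).
  { intros x y Hx Hxy Hy; destruct (Rle_lt_or_eq_dec _ _ Hxy) as [lt | ->];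
      [left; apply hincr|right]; auto. }
  assert (q_stable : forall mid top, 0 <= mid -> mid <= top -> top <= 1 ->
            mid <= psi mid -> psi top <= top ->
            forall t, mid <= t <= top -> mid <= q t <= top).
  { intros mid top ? ? ? ? ? t Ht; rewrite <- psi_eq_q by lra.
    now apply (nondecreasing_maps_interval psi mid top). }
  assert (split_eps2 : kfold q 0 1 n =
            sum_f_R0 (fun k => kfold q eps2 1 k * kfold q 0 eps2 (n - k)) n).
  { apply (kfold_split q q_cont 0 eps2 1); [apply q_stable; try lra|lra].
    apply hmap; lra. }
  assert (split_eps1 : forall m, kfold q 0 eps2 m =
            sum_f_R0 (fun l => kfold q eps1 eps2 l * kfold q 0 eps1 (m - l)) m).
  { intros m; apply (kfold_split q q_cont 0 eps1 eps2); [apply q_stable|]; lra. }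
  pose proof (kfold_local psi q 0 1 hmap psi_eq_q) as local.
  unfold a, b, c, d; rewrite !local, split_eps2 by lra.
  apply sum_eq; intros k _; rewrite split_eps1, local by lra.
  f_equal; apply sum_eq; intros l _; rewrite !local by lra; reflexivity.
Qed.
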